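(* Let $h:\mathcal S\to\mathbb R$ be bounded and $\lambda\in[0,1]$, defining the reshaped MDP $\widetilde{\mathcal M}$. For every policy $\pi$, every initial state distribution $d_0$ and every bounded $V:\mathcal S\to\mathbb R$, $$V(d_0)-V^\pi(d_0)=\frac{\gamma(1-\lambda)}{1-\gamma}\,\mathbb E_{(s,a)\sim d^\pi}\,\mathbb E_{s'\sim P(\cdot|s,a)}\big[h(s')-V(s')\big]+\lambda\big(V(d_0)-\widetilde V^\pi(d_0)\big)+\frac{1-\lambda}{1-\gamma}\big(V(d^\pi)-\widetilde V^\pi(d^\pi)\big).$$
   Context: Let $\mathcal M=(\mathcal S,\mathcal A,P,r,\gamma)$ be a discounted MDP with transition kernel $P(\cdot|s,a)$, reward $r:\mathcal S\times\mathcal A\to[0,1]$ and discount $\gamma\in[0,1)$. A policy $\pi$ is a Markov kernel from $\mathcal S$ to distributions on $\mathcal A$; $\rho^\pi(s)$ (resp. $\rho^\pi(d_0)$) is the trajectory law with $s_0=s$ (resp. $s_0\sim d_0$), $a_t\sim\pi(\cdot|s_t)$, $s_{t+1}\sim P(\cdot|s_t,a_t)$. $V^\pi(s)=\mathbb E_{\rho^\pi(s)}[\sum_t\gamma^tr(s_t,a_t)]$. For $V:\mathcal S\to\mathbb R$ and a distribution $d$, $V(d)=\mathbb E_{s\sim d}[V(s)]$. $d_t^\pi$ is the law of $s_t$ under $\rho^\pi(d_0)$, $d^\pi=(1-\gamma)\sum_t\gamma^td_t^\pi$, $d^\pi(s,a)=d^\pi(s)\pi(a|s)$. Reshaped MDP: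 $\widetilde{\mathcal M}=(\mathcal S,\mathcal A,P,\widetilde r,\lambda\gamma)$ with $\widetilde r(s,a)=r(s,a)+(1-\lambda)\gamma\,\mathbb E_{s'\sim P(\cdot|s,a)}[h(s')]$, and $\widetilde V^\pi(s)=\mathbb E_{\rho^\pi(s)}[\sum_t(\lambda\gamma)^t\widetilde r(s_t,a_t)]$. *)

From HB Require Import structures.
From mathcomp Require Import all_boot all_order all_algebra.
From mathcomp Require Import all_classical all_reals all_analysis.
Set Implicit Arguments. Unset Strict Implicit. Unset Printing Implicit Defensive.
Import Order.TTheory GRing.Theory Num.Theory.
Import numFieldNormedType.Exports.
Local Open Scope classical_set_scope.
Local Open Scope ring_scope.

Section MDP.
Context {R : realType} {dS dA : measure_display}
  (S : measurableType dS) (A : measurableType dA)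
  (P : R.-pker (S * A)%type ~> S)
  (pi : R.-pker S ~> A).

Definition stepT (f : S -> R) (s : S) : R :=
  \int[pi s]_(a in setT) \int[P (s, a)]_(s' in setT) f s'.

(* E[f(s_t) | s_0 = s] under the trajectory law rho^pi(s) *)
Definition iterT (t : nat) (f : S -> R) : S -> R := iter t stepT f.

Definition rpi (r : S * A -> R) (s : S) : R :=
  \int[pi s]_(a in setT) r (s, a).

Definition value (rew : S * A -> R) (disc : R) (s : S) : R :=
  limn (fun n : nat => \sum_(t < n) (disc ^+ t * iterT t (rpi rew) s)).

Definition at_dist (d : probability S R) (V : S -> R) : R :=
  \int[d]_(s in setT) V s.

(* E_{s~d_t^pi}[f(s)], d_t^pi the law of s_t under rho^pi(d0) *)
Definition dt_exp (d0 : probability S R) (t : nat) (f : S -> R) : R :=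
  at_dist d0 (iterT t f).

(* E_{s~d^pi}[f(s)],  d^pi = (1-gamma) sum_t gamma^t d_t^pi *)
Definition occ_exp (d0 : probability S R) (gamma : R) (f : S -> R) : R :=
  (1 - gamma) * limn (fun n : nat => \sum_(t < n) (gamma ^+ t * dt_exp d0 t f)).

(* E_{(s,a)~d^pi} E_{s'~P(.|s,a)} [g(s')] *)
Definition occ_next_exp (d0 : probability S R) (gamma : R) (g : S -> R) : R :=
  occ_exp d0 gamma (stepT g).

Definition reshaped_reward (r : S * A -> R) (h : S -> R) (lambda gamma : R)
  (sa : S * A) : R :=
  r sa + (1 - lambda) * gamma * \int[P sa]_(s' in setT) h s'.

End MDP.

(* Write T for the one-step operator (T f)(s) = E_{a~pi(.|s)} E_{s'~P(.|s,a)} f(s')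
   and, for a bounded measurable f, D f = sum_t gamma^t E_{d0}[T^t f], so that
   E_{d^pi}[f] = (1 - gamma) D f.  The proof only uses four facts:
   - D is linear on bounded measurable functions;
   - D f = E_{d0}[f] + gamma D (T f)   (shift of the series by one step);
   - the value of a bounded state reward rho with discount c < 1 satisfies the
     Bellman equation V = rho + c T V;
   - the expected reshaped reward is rho + (1 - lambda) gamma T h, with
     rho(s) = E_{a~pi(.|s)} r(s,a).
   Applying D to the Bellman equations of V^pi and of the reshaped value, and
   the shift identity to V^pi, the reshaped value and V, gives five linear
   relations from which the theorem follows by field arithmetic. *)
From HB Require Import structures.
From mathcomp Require Import all_boot all_order all_algebra.
From mathcomp Require Import all_classical all_reals all_analysis.
From mathcomp Require Import measurable_realfun lra ring.
Import Order.TTheory GRing.Theory Num.Theory.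
Import numFieldNormedType.Exports.
Local Open Scope classical_set_scope.
Local Open Scope ring_scope.

(* Bounded measurable real functions: the class on which all operators below
   are linear and on which the series defining values converge. *)
Definition bmeas {d : measure_display} {T : measurableType d} {R : realType}
  (f : T -> R) : Prop :=
  measurable_fun setT f /\ exists M, forall x, `|f x| <= M.

Section BoundedMeasurable.
Context {R : realType} {d : measure_display} {T : measurableType d}.

Lemma bmeas_cst (c : R) : bmeas (fun _ : T => c).
Proof. by split; [exact: measurable_cst | exists `|c|]. Qed.

(* Linear combinations are written f + b g throughout: every combination the
   proof needs has this shape. *)
Lemma bmeas_comb {f g : T -> R} (b : R) :
  bmeas f -> bmeas g -> bmeas (fun x => f x + b * g x).
Proof.
move=> [mf [M bf]] [mg [N bg]]; split.
  by apply: measurable_funD => //; apply: measurable_funM => //; exact: measurable_cst.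
exists (M + `|b| * N) => x; apply: le_trans (ler_normD _ _) _.
by rewrite normrM lerD // ler_wpM2l.
Qed.

Lemma bounded_fun_bmeas {f : T -> R} : measurable_fun setT f -> bounded_fun f -> bmeas f.
Proof.
move=> mf [M [_ HM]]; split => //; exists (M + 1) => x.
by apply: HM => //; rewrite ltrDl.
Qed.

End BoundedMeasurable.

Section ProbabilityIntegral.
Context {R : realType} {d : measure_display} {T : measurableType d}
  (mu : {measure set T -> \bar R}) (mu1 : mu setT = 1%E).

Lemma bmeas_integrable {f : T -> R} : bmeas f -> mu.-integrable setT (EFin \o f).
Proof.
move=> [mf [M bf]]; apply: measurable_bounded_integrable => //.
  by rewrite mu1 ltry.
exists M; split; first exact: num_real.
by move=> N hN x _; apply: le_trans (bf x) (ltW hN).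
Qed.

Lemma Rintegral_prob_cst (c : R) : \int[mu]_(x in setT) c = c.
Proof. by rewrite Rintegral_cst // mu1 /= mulr1. Qed.

Lemma Rintegral_comb {f g : T -> R} (b : R) : bmeas f -> bmeas g ->
  \int[mu]_(x in setT) (f x + b * g x) =
  \int[mu]_(x in setT) f x + b * \int[mu]_(x in setT) g x.
Proof.
move=> bf bg.
have bbg : bmeas (fun x => b * g x).
  by have := bmeas_comb b (bmeas_cst 0) bg; under eq_fun do rewrite add0r.
rewrite RintegralD ?RintegralZl //; exact: bmeas_integrable.
Qed.

Lemma Rintegral_prob_bound (f : T -> R) (M : R) : measurable_fun setT f ->
  (forall x, `|f x| <= M) -> `| \int[mu]_(x in setT) f x | <= M.
Proof.
move=> mf bf; have bmf : bmeas f by split; last exists M.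
apply: le_trans (le_normr_Rintegral _ _) _ => //; first exact: bmeas_integrable.
rewrite -[leRHS](Rintegral_prob_cst M); apply: le_Rintegral => //.
- apply: bmeas_integrable; split; first exact: measurableT_comp.
  by exists M => x; rewrite normr_id.
- exact/bmeas_integrable/bmeas_cst.
Qed.

End ProbabilityIntegral.

Section KernelApply.
Context {R : realType} {d d' : measure_display} {X : measurableType d}
  {Y : measurableType d'} (k : R.-pker X ~> Y).

Definition kapply (G : X * Y -> R) (x : X) : R := \int[k x]_(y in setT) G (x, y).

Lemma section_measurable (G : X * Y -> R) (x : X) :
  measurable_fun setT G -> measurable_fun setT (fun y => G (x, y)).
Proof. by move=> mG; apply: measurableT_comp mG (pair1_measurable x). Qed.

Lemma section_bmeas (G : X * Y -> R) (x : X) : bmeas G -> bmeas (fun y => G (x, y)).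
Proof.
by move=> [mG [M bG]]; split; [exact: section_measurable | exists M].
Qed.

Lemma kapply_bound (G : X * Y -> R) (M : R) : measurable_fun setT G ->
  (forall z, `|G z| <= M) -> forall x, `|kapply G x| <= M.
Proof.
move=> mG bG x; apply: (Rintegral_prob_bound _ (prob_kernel x)).
  exact: section_measurable.
by move=> y; exact: bG.
Qed.

Lemma kapply_comb {G H : X * Y -> R} (b : R) : bmeas G -> bmeas H ->
  kapply (fun z => G z + b * H z) = fun x => kapply G x + b * kapply H x.
Proof.
move=> bG bH; apply/funext => x.
by apply: (Rintegral_comb _ (prob_kernel x)); exact: section_bmeas.
Qed.

(* Measurability in x follows from the measurability of nonnegative kernel
   integrals, after shifting G by its bound. *)
Lemma kapply_measurable (G : X * Y -> R) : bmeas G -> measurable_fun setT (kapply G).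
Proof.
move=> bG; have [mG [M bM]] := bG.
have shift x : kapply G x = Rintegral (k x) setT (fun y => G (x, y) + M) - M.
  have := kapply_comb M bG (bmeas_cst 1).
  move=> /(congr1 (fun F => F x)); rewrite /kapply Rintegral_prob_cst ?prob_kernel //.
  by rewrite mulr1 => ->; rewrite addrK.
rewrite (funext shift); apply: measurable_funB; last exact: measurable_cst.
apply: (measurableT_comp (fine_measurable measurableT)).
apply: (measurable_fun_integral_finite_kernel (fun z => (G z + M)%:E) k).
  move=> z; rewrite lee_fin; have := bM z; rewrite ler_norml => /andP[hM _]; lra.
by apply/measurable_EFinP; apply: measurable_funD => //; exact: measurable_cst.
Qed.

Lemma kapply_bmeas {G : X * Y -> R} : bmeas G -> bmeas (kapply G).
Proof.
move=> bG; have [mG [M bM]] := bG.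
by split; [exact: kapply_measurable | exists M; exact: kapply_bound].
Qed.

End KernelApply.

Section StepOperator.
Context {R : realType} {dS dA : measure_display}
  {S : measurableType dS} {A : measurableType dA}
  (P : R.-pker (S * A)%type ~> S) (pi : R.-pker S ~> A).

Notation T := (stepT P pi).

Lemma stepT_kapply (f : S -> R) : T f = kapply pi (kapply P (fun z => f z.2)).
Proof. by []. Qed.

Lemma snd_bmeas {f : S -> R} : bmeas f -> bmeas (fun z : (S * A) * S => f z.2).
Proof.
by move=> [mf [M bf]]; split; [exact: measurableT_comp mf measurable_snd | exists M].
Qed.

Lemma stepT_bmeas {f : S -> R} : bmeas f -> bmeas (T f).
Proof.
by move=> bf; rewrite stepT_kapply; do 2 apply: kapply_bmeas; exact: snd_bmeas.
Qed.

Lemma stepT_bound (f : S -> R) (M : R) : measurable_fun setT f ->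
  (forall x, `|f x| <= M) -> forall s, `|T f s| <= M.
Proof.
move=> mf bf; have bf' : bmeas f by split; last exists M.
rewrite stepT_kapply; apply: kapply_bound.
  by apply: kapply_measurable; exact: snd_bmeas.
by apply: kapply_bound; [exact: measurableT_comp mf measurable_snd | move=> z; exact: bf].
Qed.

Lemma stepT_comb {f g : S -> R} (b : R) : bmeas f -> bmeas g ->
  T (fun x => f x + b * g x) = fun s => T f s + b * T g s.
Proof.
move=> bf bg; rewrite !stepT_kapply.
rewrite (kapply_comb P b (snd_bmeas bf) (snd_bmeas bg)).
by apply: kapply_comb; apply: kapply_bmeas; exact: snd_bmeas.
Qed.

Lemma stepT_cst (c : R) : T (fun _ => c) = fun _ => c.
Proof.
apply/funext => s; rewrite stepT_kapply /kapply.
under eq_Rintegral do rewrite Rintegral_prob_cst ?prob_kernel //.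
by rewrite Rintegral_prob_cst ?prob_kernel.
Qed.

Lemma rpi_bmeas {r : S * A -> R} : bmeas r -> bmeas (rpi pi r).
Proof. exact: kapply_bmeas. Qed.

Lemma rpi_reshaped_reward {r : S * A -> R} {h : S -> R} (lambda gamma : R) :
  bmeas r -> bmeas h ->
  rpi pi (reshaped_reward P r h lambda gamma) =
  fun s => rpi pi r s + (1 - lambda) * gamma * T h s.
Proof. by move=> br bh; exact: (kapply_comb pi _ br (kapply_bmeas P (snd_bmeas bh))). Qed.

Lemma iterTS (t : nat) (f : S -> R) : iterT P pi t.+1 f = T (iterT P pi t f).
Proof. by rewrite /iterT iterS. Qed.

Lemma iterTSr (t : nat) (f : S -> R) : iterT P pi t.+1 f = iterT P pi t (T f).
Proof. by rewrite /iterT iterSr. Qed.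

Lemma iterT_bmeas (t : nat) {f : S -> R} : bmeas f -> bmeas (iterT P pi t f).
Proof. by move=> bf; elim: t => [//|t IH]; rewrite iterTS; exact: stepT_bmeas. Qed.

Lemma iterT_bound (t : nat) (f : S -> R) (M : R) : measurable_fun setT f ->
  (forall x, `|f x| <= M) -> forall s, `|iterT P pi t f s| <= M.
Proof.
move=> mf bf; have bf' : bmeas f by split; last exists M.
elim: t => [//|t IH]; rewrite iterTS; apply: stepT_bound IH.
by have [] := iterT_bmeas t bf'.
Qed.

Lemma iterT_comb (t : nat) {f g : S -> R} (b : R) : bmeas f -> bmeas g ->
  iterT P pi t (fun x => f x + b * g x) =
  fun s => iterT P pi t f s + b * iterT P pi t g s.
Proof.
move=> bf bg; elim: t => [//|t IH].
by rewrite !iterTS IH stepT_comb //; exact: iterT_bmeas.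
Qed.

End StepOperator.

Section DiscountedSeries.
Context {R : realType}.
Implicit Types (c b M : R) (y z : nat -> R).

Definition ps c y (n : nat) : R := \sum_(t < n) (c ^+ t * y t).

(* Bounded sequences have convergent discounted series (by comparison with
   a geometric series). *)
Lemma ps_cvg {c y M} : 0 <= c < 1 -> (forall t, `|y t| <= M) -> cvgn (ps c y).
Proof.
move=> /andP[c0 c1] yM.
have -> : ps c y = series (fun t => c ^+ t * y t).
  by apply/funext => n; rewrite /ps /series /= big_mkord.
apply: (@normed_cvg _ R^o); apply: (@series_le_cvg _ _ (geometric M c)).
- by move=> n; exact: normr_ge0.
- by move=> n; rewrite /geometric /= mulr_ge0 ?exprn_ge0 // (le_trans _ (yM 0%N)).
- move=> n; rewrite /geometric /= normrM normrX (ger0_norm c0) mulrC.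
  by rewrite ler_wpM2r // exprn_ge0.
- by apply: is_cvg_geometric_series; rewrite ger0_norm.
Qed.

Lemma ps_comb c y z b n :
  ps c (fun t => y t + b * z t) n = ps c y n + b * ps c z n.
Proof. by rewrite /ps mulr_sumr -big_split /=; apply: eq_bigr => i _; ring. Qed.

Lemma lim_ps_comb {c y z b M N} : 0 <= c < 1 ->
  (forall t, `|y t| <= M) -> (forall t, `|z t| <= N) ->
  limn (ps c (fun t => y t + b * z t)) = limn (ps c y) + b * limn (ps c z).
Proof.
move=> hc hy hz; apply: cvg_lim => //.
rewrite (funext (ps_comb c y z b)).
apply: cvgD; first exact: ps_cvg hc hy.
by apply: cvgM; [exact: cvg_cst | exact: ps_cvg hc hz].
Qed.

Lemma ps_S c y n : ps c y n.+1 = y 0%N + c * ps c (fun t => y t.+1) n.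
Proof.
rewrite /ps big_ord_recl /= expr0 mul1r mulr_sumr; congr (_ + _).
by apply: eq_bigr => i _; rewrite /bump /= add1n exprS mulrA.
Qed.

Lemma lim_ps_shift {c y M} : 0 <= c < 1 -> (forall t, `|y t| <= M) ->
  limn (ps c y) = y 0%N + c * limn (ps c (fun t => y t.+1)).
Proof.
move=> hc hy; apply: cvg_lim => //; rewrite -cvg_shiftS /=.
under eq_fun do rewrite ps_S.
apply: cvgD; first exact: cvg_cst.
by apply: cvgM; [exact: cvg_cst | exact: ps_cvg hc (fun t => hy t.+1)].
Qed.

Lemma ps_diff c y n m : (n <= m)%N ->
  ps c y m - ps c y n = \sum_(n <= t < m) (c ^+ t * y t).
Proof.
move=> nm; rewrite /ps -!(big_mkord xpredT (fun t => c ^+ t * y t)).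
by rewrite (@big_cat_nat _ _ _ n 0 m _ _ (leq0n n) nm) /= addrC addrK.
Qed.

Lemma ps_tail {c y M} : 0 <= c < 1 -> (forall t, `|y t| <= M) -> forall n,
  `|limn (ps c y) - ps c y n| <= limn (ps c (fun _ => M)) - ps c (fun _ => M) n.
Proof.
move=> hc hy n; have /andP[c0 _] := hc.
have cM := @ps_cvg c (fun _ => M) `|M| hc (fun _ => lexx _).
have cA : (fun m => `|ps c y m - ps c y n|) @ \oo --> `|limn (ps c y) - ps c y n|.
  by apply: cvg_norm; apply: cvgB; [exact: ps_cvg hc hy | exact: cvg_cst].
have cB : (fun m => ps c (fun _ => M) m - ps c (fun _ => M) n) @ \oo -->
    limn (ps c (fun _ => M)) - ps c (fun _ => M) n.
  by apply: cvgB => //; exact: cvg_cst.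
rewrite -(cvg_lim _ cA) // -(cvg_lim _ cB) //.
apply: ler_lim; [exact: cvgP cA | exact: cvgP cB |].
exists n => // m /= nm; rewrite !ps_diff //.
apply: le_trans (ler_norm_sum _ _ _) _; apply: ler_sum => t _.
by rewrite normrM normrX (ger0_norm c0) ler_wpM2l // exprn_ge0.
Qed.

Lemma ps_tail_cvg0 c M : 0 <= c < 1 ->
  (fun n => limn (ps c (fun _ => M)) - ps c (fun _ => M) n) @ \oo --> 0.
Proof.
move=> hc; have cM := @ps_cvg c (fun _ => M) `|M| hc (fun _ => lexx _).
by rewrite -(subrr (limn (ps c (fun _ => M)))); apply: cvgB => //; exact: cvg_cst.
Qed.

Lemma cvg_dominated (u e : nat -> R) (a : R) :
  (forall n, `|a - u n| <= e n) -> e @ \oo --> 0 -> u @ \oo --> a.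
Proof.
move=> hb he; apply/cvgrPdist_le => eps eps0.
move/cvgrPdist_le : he => /(_ eps eps0) [N _ hN]; exists N => // n /hN.
by rewrite sub0r normrN; apply: le_trans; rewrite (le_trans (hb n)) // ler_norm.
Qed.

End DiscountedSeries.

Section StateValue.
Context {R : realType} {dS dA : measure_display}
  {S : measurableType dS} {A : measurableType dA}
  (P : R.-pker (S * A)%type ~> S) (pi : R.-pker S ~> A)
  (rho : S -> R) (M : R) (c : R).
Hypotheses (rho_meas : measurable_fun setT rho) (rho_bound : forall x, `|rho x| <= M)
  (hc : 0 <= c < 1).

Definition svalue (s : S) : R := limn (ps c (fun t => iterT P pi t rho s)).

Definition svalue_partial (n : nat) (s : S) : R := ps c (fun t => iterT P pi t rho s) n.

Let rho_bmeas : bmeas rho. Proof. by split; last exists M. Qed.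

Let iter_bound t s : `|iterT P pi t rho s| <= M.
Proof. exact: iterT_bound. Qed.

Lemma svalue_partialS n : svalue_partial n.+1 =
  fun s => svalue_partial n s + c ^+ n * iterT P pi n rho s.
Proof. by apply/funext => s; rewrite /svalue_partial /ps big_ord_recr. Qed.

Lemma svalue_partial0 : svalue_partial 0 = fun _ => 0.
Proof. by apply/funext => s; rewrite /svalue_partial /ps big_ord0. Qed.

Lemma svalue_partial_bmeas n : bmeas (svalue_partial n).
Proof.
elim: n => [|n IH]; first by rewrite svalue_partial0; exact: bmeas_cst.
by rewrite svalue_partialS; apply: bmeas_comb => //; exact: iterT_bmeas.
Qed.

(* Uniform bound on the remainder, which makes svalue bounded measurable as a
   pointwise limit of bounded measurable partial sums. *)
Lemma svalue_tail n s : `|svalue s - svalue_partial n s| <=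
  limn (ps c (fun _ => M)) - ps c (fun _ => M) n.
Proof. exact: ps_tail hc (fun t => iter_bound t s) n. Qed.

Lemma svalue_bmeas : bmeas svalue.
Proof.
split.
  apply: (measurable_fun_cvg (h := svalue_partial)).
    by move=> m; have [] := svalue_partial_bmeas m.
  by move=> x _; exact: ps_cvg hc (fun t => iter_bound t x).
exists (limn (ps c (fun _ => M)) - ps c (fun _ => M) 0) => s.
by have := svalue_tail 0 s; rewrite /svalue_partial /ps big_ord0 subr0.
Qed.

Lemma stepT_svalue_partial n s :
  stepT P pi (svalue_partial n) s = ps c (fun t => stepT P pi (iterT P pi t rho) s) n.
Proof.
elim: n => [|n IH]; first by rewrite /ps big_ord0 svalue_partial0 stepT_cst.
rewrite svalue_partialS stepT_comb ?IH /ps ?big_ord_recr //.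
  exact: svalue_partial_bmeas.
exact: iterT_bmeas.
Qed.

(* Bellman equation: T commutes with the series because T preserves the
   uniform bound on its remainder. *)
Lemma bellman : svalue = fun s => rho s + c * stepT P pi svalue s.
Proof.
apply/funext => s; rewrite {1}/svalue (lim_ps_shift hc (fun t => iter_bound t s)).
congr (_ + c * _); under eq_fun do rewrite iterTS.
apply: cvg_lim => //; apply: (cvg_dominated _ (fun n =>
  limn (ps c (fun _ => M)) - ps c (fun _ => M) n)); last exact: ps_tail_cvg0.
move=> n; rewrite -stepT_svalue_partial.
have [bV bVn] := (svalue_bmeas, svalue_partial_bmeas n).
have -> : stepT P pi svalue s - stepT P pi (svalue_partial n) s =
    stepT P pi (fun x => svalue x + -1 * svalue_partial n x) s.
  by rewrite stepT_comb // mulN1r.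
apply: stepT_bound; first by have [] := bmeas_comb (-1) bV bVn.
by move=> x; rewrite mulN1r; exact: svalue_tail.
Qed.

End StateValue.

Lemma value_svalue {R : realType} {dS dA : measure_display}
  {S : measurableType dS} {A : measurableType dA}
  (P : R.-pker (S * A)%type ~> S) (pi : R.-pker S ~> A) (rew : S * A -> R) (c : R) :
  value P pi rew c = svalue P pi (rpi pi rew) c.
Proof. by []. Qed.

Section DiscountedOccupancy.
Context {R : realType} {dS dA : measure_display}
  {S : measurableType dS} {A : measurableType dA}
  (P : R.-pker (S * A)%type ~> S) (pi : R.-pker S ~> A)
  (d0 : probability S R) (c : R).
Hypothesis hc : 0 <= c < 1.

Definition disc_occ (f : S -> R) : R := limn (ps c (fun t => dt_exp P pi d0 t f)).

Lemma occ_exp_disc_occ (f : S -> R) : occ_exp P pi d0 c f = (1 - c) * disc_occ f.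
Proof. by []. Qed.

Lemma dt_exp_bound {f : S -> R} :
  bmeas f -> exists M, forall t, `|dt_exp P pi d0 t f| <= M.
Proof.
move=> bf; have [mf [M bM]] := bf; exists M => t.
apply: (Rintegral_prob_bound _ (probability_setT d0)); last exact: iterT_bound.
by have [] := iterT_bmeas P pi t bf.
Qed.

Lemma dt_exp_comb (t : nat) {f g : S -> R} (b : R) : bmeas f -> bmeas g ->
  dt_exp P pi d0 t (fun x => f x + b * g x) =
  dt_exp P pi d0 t f + b * dt_exp P pi d0 t g.
Proof.
move=> bf bg; rewrite /dt_exp /at_dist iterT_comb //.
by apply: (Rintegral_comb _ (probability_setT d0)); exact: iterT_bmeas.
Qed.

Lemma disc_occ_comb {f g : S -> R} (b : R) : bmeas f -> bmeas g ->
  disc_occ (fun x => f x + b * g x) = disc_occ f + b * disc_occ g.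
Proof.
move=> bf bg; have [M bM] := dt_exp_bound bf; have [N bN] := dt_exp_bound bg.
rewrite /disc_occ; under eq_fun do rewrite dt_exp_comb //.
exact: lim_ps_comb hc bM bN.
Qed.

Lemma disc_occ_shift {f : S -> R} : bmeas f ->
  disc_occ f = at_dist d0 f + c * disc_occ (stepT P pi f).
Proof.
move=> bf; have [M bM] := dt_exp_bound bf.
rewrite /disc_occ (lim_ps_shift hc bM).
by under [in RHS]eq_fun do rewrite /dt_exp -iterTSr.
Qed.

Lemma disc_occ_svalue {rho : S -> R} {M c' : R} : measurable_fun setT rho ->
  (forall x, `|rho x| <= M) -> 0 <= c' < 1 ->
  disc_occ (svalue P pi rho c') =
  disc_occ rho + c' * disc_occ (stepT P pi (svalue P pi rho c')).
Proof.
move=> mrho rhoM hc'; have brho : bmeas rho by split; last exists M.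
have bTV := stepT_bmeas P pi (svalue_bmeas P pi _ _ _ mrho rhoM hc').
by rewrite {1}(bellman P pi _ _ _ mrho rhoM hc') (disc_occ_comb c' brho bTV).
Qed.

End DiscountedOccupancy.

(* The theorem is a field identity once five linear relations are known.
   Y, X, Z stand for V^pi, the reshaped value and V: Y0 = E_{d0}[V^pi],
   sY = D V^pi, sY1 = D (T V^pi), and likewise for X and Z; moreover
   sr = D rho and sH1 = D (T h).  The hypotheses are the shift identities
   for Y, X, Z and D applied to the two Bellman equations. *)
Lemma reshaping_algebra {R : realType}
  {g l Y0 X0 Z0 sr sH1 sZ1 sX1 sY1 sY sX sZ : R} :
  g != 1 ->
  sY = Y0 + g * sY1 -> sY = sr + g * sY1 ->
  sX = X0 + g * sX1 -> sX = sr + (1 - l) * g * sH1 + l * g * sX1 ->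
  sZ = Z0 + g * sZ1 ->
  Z0 - Y0 = g * (1 - l) / (1 - g) * ((1 - g) * (sH1 + -1 * sZ1)) + l * (Z0 - X0)
    + (1 - l) / (1 - g) * ((1 - g) * sZ - (1 - g) * sX).
Proof.
move=> g1 eY1 eY2 eX1 eX2 eZ.
have eY0 : Y0 = sr by apply: (addIr (g * sY1)); rewrite -eY1 -eY2.
have eX0 : X0 = sr + (1 - l) * g * sH1 + l * g * sX1 - g * sX1.
  by rewrite -eX2 eX1 addrK.
by rewrite eY0 eZ eX1 eX0; field; rewrite subr_eq0 eq_sym.
Qed.

Theorem mainTheorem8 (R : realType) (dS dA : measure_display)
  (S : measurableType dS) (A : measurableType dA)
  (P : R.-pker (S * A)%type ~> S) (r : S * A -> R) (gamma : R)
  (h : S -> R) (lambda : R)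
  (pi : R.-pker S ~> A) (d0 : probability S R) (V : S -> R) :
  measurable_fun setT r -> (forall sa, 0 <= r sa <= 1) ->
  0 <= gamma < 1 ->
  measurable_fun setT h -> bounded_fun h ->
  0 <= lambda <= 1 ->
  measurable_fun setT V -> bounded_fun V ->
  let Vpi := value P pi r gamma in
  let Vtil := value P pi (reshaped_reward P r h lambda gamma) (lambda * gamma) in
  at_dist d0 V - at_dist d0 Vpi =
    gamma * (1 - lambda) / (1 - gamma) *
      occ_next_exp P pi d0 gamma (fun s' => h s' - V s')
  + lambda * (at_dist d0 V - at_dist d0 Vtil)
  + (1 - lambda) / (1 - gamma) *
      (occ_exp P pi d0 gamma V - occ_exp P pi d0 gamma Vtil).
Proof.
move=> mr r01 hg mh hbd /andP[l0 l1] mV Vbd; cbv zeta.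
have hlg : 0 <= lambda * gamma < 1.
  by have /andP[g0 g1] := hg; rewrite mulr_ge0 //= (le_lt_trans _ g1) // ler_piMl.
have [bh bV] := (bounded_fun_bmeas mh hbd, bounded_fun_bmeas mV Vbd).
have br : bmeas r.
  by split; last by exists 1 => sa; have /andP[? ?] := r01 sa; rewrite ger0_norm.
rewrite !value_svalue (rpi_reshaped_reward P pi lambda gamma br bh).
set rho := rpi pi r; set rhot := fun s => rho s + _.
have brho : bmeas rho := rpi_bmeas pi br.
have brhot : bmeas rhot := bmeas_comb _ brho (stepT_bmeas P pi bh).
have [[mrho [Mr rhoM]] [mrhot [Mt rhotM]]] := (brho, brhot).
have bVpi := svalue_bmeas P pi _ _ _ mrho rhoM hg.
have bVtil := svalue_bmeas P pi _ _ _ mrhot rhotM hlg.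
have eY := disc_occ_svalue P pi d0 gamma hg mrho rhoM hg.
have eX := disc_occ_svalue P pi d0 gamma hg mrhot rhotM hlg.
rewrite {2}/rhot (disc_occ_comb P pi d0 gamma hg _ brho (stepT_bmeas P pi bh)) in eX.
rewrite /occ_next_exp !occ_exp_disc_occ.
rewrite (_ : (fun s' => h s' - V s') = fun x => h x + -1 * V x); last first.
  by apply/funext => x; rewrite mulN1r.
rewrite (stepT_comb P pi (-1) bh bV).
rewrite (disc_occ_comb P pi d0 gamma hg _ (stepT_bmeas P pi bh) (stepT_bmeas P pi bV)).
apply: (reshaping_algebra _ (disc_occ_shift P pi d0 gamma hg bVpi) eY
  (disc_occ_shift P pi d0 gamma hg bVtil) eX (disc_occ_shift P pi d0 gamma hg bV)).
by rewrite lt_eqF //; case/andP: hg.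
Qed.
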